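(* Let $A \in \mathbb{R}^{m \times n}$ be the payoff matrix of a finite two-player zero-sum game with value $v^*$, and let $\{(x_t,y_t)\}_{t\in\mathbb{N}}$ together with $\{(\overline{x}_t,\overline{y}_t)\}_{t \in \mathbb{N}}$ be an anticipatory fictitious play (AFP) process for $A$ (defined in the context), with arbitrary choices among best responses when there are ties. Then $$\lim_{t\to\infty} \min \overline{x}_t^{\mathsf T} A = \lim_{t\to\infty} \max A\overline{y}_t = v^*,$$ i.e. the average strategies converge to a Nash equilibrium, and moreover $$\max A\overline{y}_t - \min \overline{x}_t^{\mathsf T} A = O\big(t^{-1/(m+n-2)}\big) \quad \text{for all } t \in \mathbb{N},$$ the same rate bound that holds for fictitious play.
   Context: A two-player zero-sum game is given by $A\in\mathbb{R}^{m\times n}$: if player 1 plays row $i$ and player 2 plays column $j$, payoffs are $(A_{i,j},-A_{i,j})$. $\Delta^k$ denotes the probability simplex in $\mathbb{R}^k$; strategies are $x\in\Delta^m$, $y\in\Delta^n$. For a vector $w$, $\max w$ and $\min w$ denote its largest and smallest entries. The value is $v^* = \max_{x\in\Delta^m}\min_{y\in\Delta^n} x^{\mathsf T}Ay$. $e_1,e_2,\dots$ denote standard basis vectors. Best response operators: $\texttt{BR}^1_A(y)=\{e_i\in\mathbb{R}^m : i\in\arg\max Ay\}$ and $\texttt{BR}^2_A(x)=\{e_j\in\mathbb{R}^n: j \in \arg\min x^{\mathsf T}A\}$. The AFP process: for some $i,j$, $x_1=\overline{x}_1=e_i$, $y_1=\overline{y}_1=e_j$, and for each $t\in\mathbb{N}$: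 $x'_{t+1}\in\texttt{BR}^1_A(\overline{y}_t)$, $y'_{t+1}\in\texttt{BR}^2_A(\overline{x}_t)$; $\overline{x}'_{t+1}=\tfrac{t}{t+1}\overline{x}_t+\tfrac{1}{t+1}x'_{t+1}$, $\overline{y}'_{t+1}=\tfrac{t}{t+1}\overline{y}_t+\tfrac{1}{t+1}y'_{t+1}$; $x_{t+1}\in\texttt{BR}^1_A(\overline{y}'_{t+1})$, $y_{t+1}\in\texttt{BR}^2_A(\overline{x}'_{t+1})$; $\overline{x}_{t+1}=\tfrac{1}{t+1}\sum_{k=1}^{t+1}x_k$, $\overline{y}_{t+1}=\tfrac{1}{t+1}\sum_{k=1}^{t+1}y_k$. *)

From HB Require Import structures.
From mathcomp Require Import all_boot all_order all_algebra.
From mathcomp Require Import all_classical all_reals all_analysis.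
Set Implicit Arguments. Unset Strict Implicit. Unset Printing Implicit Defensive.
Import Order.TTheory GRing.Theory Num.Theory.
Local Open Scope ring_scope.

Section AFP.
Context {R : realType}.

(* largest / smallest entry of a vector w in R^m (0 if m = 0, never used) *)
Definition vmax m (w : 'I_m -> R) : R :=
  if [pick k : 'I_m] is Some k then \big[Num.max/w k]_(j < m) w j else 0.
Definition vmin m (w : 'I_m -> R) : R :=
  if [pick k : 'I_m] is Some k then \big[Num.min/w k]_(j < m) w j else 0.

Definition simplex m (x : 'I_m -> R) : Prop :=
  (forall i, 0 <= x i) /\ \sum_(i < m) x i = 1.

Definition xA m n (A : 'M[R]_(m, n)) (x : 'I_m -> R) : 'I_n -> R :=
  fun j => \sum_(i < m) x i * A i j.
Definition Ay m n (A : 'M[R]_(m, n)) (y : 'I_n -> R) : 'I_m -> R :=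
  fun i => \sum_(j < n) A i j * y j.

(* value v* = max_{x in Delta^m} min x^T A  (the max is attained, so it is the sup) *)
Definition game_value m n (A : 'M[R]_(m, n)) : R :=
  sup [set v | exists x, simplex x /\ v = vmin (xA A x)].

Definition ev m (i : 'I_m) : 'I_m -> R := fun r => (r == i)%:R.

(* best responses: e_i in BR^1_A(y) iff i in argmax Ay ; e_j in BR^2_A(x) iff j in argmin x^T A *)
Definition BR1 m n (A : 'M[R]_(m, n)) (y : 'I_n -> R) (i : 'I_m) : bool :=
  Ay A y i == vmax (Ay A y).
Definition BR2 m n (A : 'M[R]_(m, n)) (x : 'I_m -> R) (j : 'I_n) : bool :=
  xA A x j == vmin (xA A x).

Definition avg m (s : nat -> 'I_m) (t : nat) : 'I_m -> R :=
  fun r => (\sum_(1 <= k < t.+1) ev (s k) r) / t%:R.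

Definition anti_avg m (s s' : nat -> 'I_m) (t : nat) : 'I_m -> R :=
  fun r => (t%:R / t.+1%:R) * avg s t r + (1 / t.+1%:R) * ev (s' t.+1) r.

(* AFP process: x_t = e_{xi t}, y_t = e_{yj t} (t >= 1; x_1, y_1 arbitrary),
   x'_t = e_{xi' t}, y'_t = e_{yj' t} (t >= 2). *)
Definition AFP m n (A : 'M[R]_(m, n))
    (xi xi' : nat -> 'I_m) (yj yj' : nat -> 'I_n) : Prop :=
  forall t : nat, (1 <= t)%N ->
    [/\ BR1 A (avg yj t) (xi' t.+1),
        BR2 A (avg xi t) (yj' t.+1),
        BR1 A (anti_avg yj yj' t) (xi t.+1)
      & BR2 A (anti_avg xi xi' t) (yj t.+1)].

End AFP.

From mathcomp Require Import all_boot all_order all_algebra.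
From mathcomp Require Import all_classical all_reals all_analysis.
From mathcomp Require Import ring lra zify.
Set Implicit Arguments. Unset Strict Implicit. Unset Printing Implicit Defensive.
Import Order.TTheory GRing.Theory Num.Theory.
Import numFieldNormedType.Exports.
Local Open Scope classical_set_scope.
Local Open Scope ring_scope.

(* AFP is fictitious play in which each choice is only a 2a-approximate best
   response (a bounds the entries of A) to the cumulative payoff vectors
   U_t = t x̄_t^T A and V_t = t A ȳ_t: the anticipated average differs from
   t/(t+1) times the actual one by a single pure strategy of weight 1/(t+1).
   Robinson's proof for fictitious play survives such errors.  By induction on
   the number d + 2 of strategies, the cumulative gap max V - min U grows by
   O(d N^(d-1)) over N^d steps: on each window of N^(d-1) steps either some strategy is
   never near-optimal, and the window is a perturbed play of a smaller game,
   or every strategy is near-optimal somewhere in it, and then the gap is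
   within O(N^(d-1)) of V - U at some pair played earlier, which is at most
   the initial gap.  Taking N ~ t^(1/d) with d = m + n - 2 bounds the duality
   gap of the averaged strategies by O(t^(-1/d)), and weak duality puts v*
   inside it. *)

(** * Robinson's argument for perturbed fictitious play *)

Section PerturbedFictitiousPlay.
Variable R : realFieldType.

Definition near_argmax p (dl : R) (K : {set 'I_p}) (w : 'I_p -> R) (r : 'I_p) :=
  r \in K /\ forall k, k \in K -> w k <= w r + dl.

(* Robinson's vector system perturbed by dl: U t j and V t i are cumulative
   payoffs of column j and row i, and the pure strategies ii t and jj t added
   at step t are dl-approximate best responses within the active sets I, J. *)
Definition perturbed_fp m n (A : 'M[R]_(m, n)) (dl : R)
    (I : {set 'I_m}) (J : {set 'I_n}) (U : nat -> 'I_n -> R) (V : nat -> 'I_m -> R)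
    (ii : nat -> 'I_m) (jj : nat -> 'I_n) (s T : nat) :=
  forall tau, (s <= tau < s + T)%N ->
  [/\ forall j, U tau.+1 j = U tau j + A (ii tau) j,
      forall i, V tau.+1 i = V tau i + A i (jj tau),
      near_argmax dl I (V tau) (ii tau)
    & near_argmax dl J (fun j => - U tau j) (jj tau)].

Lemma perturbed_fp_tr m n (A : 'M[R]_(m, n)) dl I J U V ii jj s T :
  perturbed_fp A dl I J U V ii jj s T ->
  perturbed_fp (- A^T) dl J I (fun t j => - V t j) (fun t i => - U t i) jj ii s T.
Proof.
move=> hs tau htau; have [hU hV hi hj] := hs tau htau.
split=> // [k|k|]; rewrite ?mxE ?hU ?hV; [lra|lra|].
by case: hi => iI hi; split=> // k kI; rewrite !opprK; apply: hi.
Qed.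

Lemma perturbed_fp_sub m n (A : 'M[R]_(m, n)) dl I J U V ii jj s T s' T' :
  (s <= s')%N -> (s' + T' <= s + T)%N ->
  perturbed_fp A dl I J U V ii jj s T -> perturbed_fp A dl I J U V ii jj s' T'.
Proof. by move=> h1 h2 hs tau htau; apply: hs; lia. Qed.

Lemma perturbed_fp_driftV m n (A : 'M[R]_(m, n)) a dl I J U V ii jj s T :
  (forall i j, `|A i j| <= a) -> perturbed_fp A dl I J U V ii jj s T ->
  forall tau k i, (s <= tau)%N -> (tau + k <= s + T)%N ->
  V tau i - k%:R * a <= V (tau + k)%N i <= V tau i + k%:R * a.
Proof.
move=> hA hs tau k i h1; elim: k => [|k IH] h2.
  by rewrite addn0 mul0r subr0 addr0 lexx.
have [_ hV _ _] := hs (tau + k)%N ltac:(lia).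
have := IH ltac:(lia); have := hA i (jj (tau + k)%N).
rewrite addnS hV -natr1 mulrDl mul1r ler_norml => /andP[? ?] /andP[? ?].
apply/andP; split; lra.
Qed.

Lemma perturbed_fp_driftU m n (A : 'M[R]_(m, n)) a dl I J U V ii jj s T :
  (forall i j, `|A i j| <= a) -> perturbed_fp A dl I J U V ii jj s T ->
  forall tau k j, (s <= tau)%N -> (tau + k <= s + T)%N ->
  U tau j - k%:R * a <= U (tau + k)%N j <= U tau j + k%:R * a.
Proof.
move=> hA /perturbed_fp_tr hs tau k j h1 h2.
have hAT i' j' : `|(- A^T) i' j'| <= a by rewrite !mxE normrN.
have /andP[] := perturbed_fp_driftV hAT hs j h1 h2.
by move=> ? ?; apply/andP; split; lra.
Qed.

(* \sum_(s <= tau < s + u) (V w (ii tau) - U w (jj tau)) takes the same value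
   at w = s and w = s + u: its total increment is
   \sum_(tau, w) A (ii tau) (jj w) - \sum_(tau, w) A (ii w) (jj tau) = 0. *)
Lemma perturbed_fp_played_gap m n (A : 'M[R]_(m, n)) dl I J U V ii jj s u (G : R) :
  perturbed_fp A dl I J U V ii jj s u -> (0 < u)%N ->
  (forall i j, i \in I -> j \in J -> V s i - U s j <= G) ->
  exists2 tau, (s <= tau < s + u)%N & V (s + u)%N (ii tau) - U (s + u)%N (jj tau) <= G.
Proof.
move=> hs hu hG.
pose S w := \sum_(s <= tau < s + u) (V w (ii tau) - U w (jj tau)).
have S_const : S (s + u)%N = S s.
  apply/eqP; rewrite -subr_eq0 -telescope_sumr ?leq_addr //.
  rewrite (eq_big_nat _ _ (F2 := fun w => \sum_(s <= tau < s + u) A (ii tau) (jj w)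
      - \sum_(s <= tau < s + u) A (ii w) (jj tau))); last first.
    move=> w hw; have [hU hV _ _] := hs w ltac:(lia).
    rewrite /S -sumrB -!sumrB; apply: eq_bigr => tau _; rewrite hU hV; lra.
  by rewrite sumrB exchange_big_nat subrr.
have S0 : S s <= \sum_(s <= tau < s + u) G.
  apply: ler_sum_nat => tau htau; have [_ _ [iI _] [jJ _]] := hs tau ltac:(lia).
  exact: hG.
apply: contrapT => hno; move: S0; apply/negP; rewrite -ltNge -S_const.
apply: ltr_sum_nat => [|tau htau]; first by lia.
by rewrite ltNge; apply/negP => h; apply: hno; exists tau.
Qed.

(* Compare i and j with the pair played at the time given by
   perturbed_fp_played_gap, at the moments when that pair was near-optimal. *)
Lemma perturbed_fp_gap_all_near_argmax m n (A : 'M[R]_(m, n)) a dl I J U V ii jj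
    s u s' (G : R) :
  (forall i j, `|A i j| <= a) -> perturbed_fp A dl I J U V ii jj s u ->
  (0 < u)%N -> (s <= s' <= s + u)%N ->
  (forall i j, i \in I -> j \in J -> V s i - U s j <= G) ->
  (forall k, k \in I ->
     exists2 tau, (s' <= tau <= s + u)%N & near_argmax dl I (V tau) k) ->
  (forall l, l \in J ->
     exists2 tau, (s' <= tau <= s + u)%N & near_argmax dl J (fun j => - U tau j) l) ->
  forall i j, i \in I -> j \in J ->
    V (s + u)%N i - U (s + u)%N j <= G + 4%:R * a * (s + u - s')%:R + 2%:R * dl.
Proof.
move=> hA hs hu hs' hG hI hJ i j iI jJ.
have ha : 0 <= a := le_trans (normr_ge0 _) (hA i j).
have [tau0 htau0 hplayed] := perturbed_fp_played_gap hs hu hG.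
have [_ _ [i0I _] [j0J _]] := hs tau0 htau0.
have [t1 ht1 [_ e1]] := hI _ i0I; have [t2 ht2 [_ e2]] := hJ _ j0J.
have drift tau : (s' <= tau <= s + u)%N -> (s + u - tau)%:R * a <= (s + u - s')%:R * a.
  by move=> htau; apply: ler_wpM2r => //; rewrite ler_nat; lia.
have dV k :
    V t1 k - (s + u - t1)%:R * a <= V (s + u)%N k <= V t1 k + (s + u - t1)%:R * a.
  have e : (t1 + (s + u - t1))%N = (s + u)%N by lia.
  move: (perturbed_fp_driftV hA hs (tau := t1) (k := (s + u - t1)%N) k).
  by rewrite e; apply; lia.
have dU l :
    U t2 l - (s + u - t2)%:R * a <= U (s + u)%N l <= U t2 l + (s + u - t2)%:R * a.
  have e : (t2 + (s + u - t2))%N = (s + u)%N by lia.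
  move: (perturbed_fp_driftU hA hs (tau := t2) (k := (s + u - t2)%N) l).
  by rewrite e; apply; lia.
have /andP[? ?] := dV i; have /andP[? ?] := dV (ii tau0).
have /andP[? ?] := dU j; have /andP[? ?] := dU (jj tau0).
have := e1 _ iI; have := e2 _ jJ; have := drift _ ht1; have := drift _ ht2.
lra.
Qed.

Lemma not_near_argmax p dl (K : {set 'I_p}) w r :
  r \in K -> ~ near_argmax dl K w r -> exists2 k, k \in K & w r + dl < w k.
Proof.
move=> rK hr; apply: contrapT => hno; apply: hr; split=> // k kK.
by rewrite leNgt; apply/negP => hlt; apply: hno; exists k.
Qed.

Lemma perturbed_fp_singleton_gap m n (A : 'M[R]_(m, n)) dl
    (I : {set 'I_m}) (J : {set 'I_n}) U V ii jj s t (G : R) i j :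
  (#|I| + #|J|)%N = 2%N -> perturbed_fp A dl I J U V ii jj s t ->
  (forall i j, i \in I -> j \in J -> V s i - U s j <= G) ->
  i \in I -> j \in J -> V (s + t)%N i - U (s + t)%N j <= G.
Proof.
move=> hc hs hG iI jJ.
have [I1 J1] : #|I| = 1%N /\ #|J| = 1%N.
  have : (0 < #|I|)%N by apply/card_gt0P; exists i.
  have : (0 < #|J|)%N by apply/card_gt0P; exists j.
  lia.
have [x eI] := cards1P (introT eqP I1); have [y eJ] := cards1P (introT eqP J1).
have onlyI k : k \in I -> k = i by move: iI; rewrite eI !inE => /eqP -> /eqP.
have onlyJ l : l \in J -> l = j by move: jJ; rewrite eJ !inE => /eqP -> /eqP.
elim: t hs => [|t IH] hs; first by rewrite addn0; apply: hG.
have [hU hV [/onlyI iit _] [/onlyJ jjt _]] := hs (s + t)%N ltac:(lia).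
rewrite addnS hU hV iit jjt.
suff : V (s + t)%N i - U (s + t)%N j <= G by lra.
by apply: IH; apply: perturbed_fp_sub hs; lia.
Qed.

Definition robinson_bound (a dl : R) (d : nat) :=
  forall m n (A : 'M[R]_(m, n)) (I : {set 'I_m}) (J : {set 'I_n}) U V ii jj s t
      (G : R) (N : nat) i j,
    (forall i j, `|A i j| <= a) -> (#|I| + #|J|)%N = d.+2 ->
    perturbed_fp A dl I J U V ii jj s t ->
    (forall i j, i \in I -> j \in J -> V s i - U s j <= G) ->
    (0 < N)%N -> (t <= N ^ d)%N -> i \in I -> j \in J ->
    N%:R * (V (s + t)%N i - U (s + t)%N j - G) <=
      d%:R * (6%:R * a + 2%:R * dl) * N%:R ^+ d.

Lemma robinson_bound0 a dl : robinson_bound a dl 0.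
Proof.
move=> m n A I J U V ii jj s t G N i j _ hc hs hG _ _ iI jJ.
rewrite !mul0r; apply: mulr_ge0_le0; first exact: ler0n.
by rewrite subr_le0; apply: perturbed_fp_singleton_gap hs hG iI jJ.
Qed.

Lemma robinson_bound_drop_row a dl d m n (A : 'M[R]_(m, n))
    (I : {set 'I_m}) (J : {set 'I_n}) U V ii jj s L (G : R) N r :
  robinson_bound a dl d -> 0 <= dl ->
  (forall i j, `|A i j| <= a) -> (#|I| + #|J|)%N = d.+3 ->
  perturbed_fp A dl I J U V ii jj s L ->
  (forall i j, i \in I -> j \in J -> V s i - U s j <= G) ->
  (0 < N)%N -> (L <= N ^ d)%N -> r \in I ->
  (forall tau, (s <= tau <= s + L)%N -> ~ near_argmax dl I (V tau) r) ->
  forall i j, i \in I -> j \in J ->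
    N%:R * (V (s + L)%N i - U (s + L)%N j - G) <=
      d%:R * (6%:R * a + 2%:R * dl) * N%:R ^+ d.
Proof.
move=> hP hdl hA hc hs hG hN hL rI hr.
have hc' : (#|I :\ r| + #|J|)%N = d.+2.
  by move: hc; rewrite (cardsD1 r I) rI add1n addSn => -[].
have hs' : perturbed_fp A dl (I :\ r) J U V ii jj s L.
  move=> tau htau; have [hU hV [iI hi] hj] := hs tau htau.
  split=> //; split=> [|k /setD1P[_ /hi] //].
  rewrite in_setD1 iI andbT; apply/eqP => e.
  by apply: (hr tau); [lia | rewrite -e].
have hG' i j : i \in I :\ r -> j \in J -> V s i - U s j <= G.
  by move=> /setD1P[_]; apply: hG.
have key i j : i \in I :\ r -> j \in J -> N%:R * (V (s + L)%N i - U (s + L)%N j - G) <=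
    d%:R * (6%:R * a + 2%:R * dl) * N%:R ^+ d.
  by move=> iI jJ; apply: (hP _ _ A (I :\ r) J U V ii jj s L G N).
move=> i j iI jJ; case: (eqVneq i r) => [->|ir]; last first.
  by apply: key; rewrite ?in_setD1 ?ir.
have [k kI hk] := not_near_argmax rI (hr (s + L)%N ltac:(lia)).
have kr : k != r by apply/eqP => e; move: hk; rewrite e; lra.
apply: le_trans (key k j _ jJ); last by rewrite in_setD1 kr.
by apply: ler_wpM2l; [rewrite ler0n | lra].
Qed.

Lemma robinson_bound_drop_col a dl d m n (A : 'M[R]_(m, n))
    (I : {set 'I_m}) (J : {set 'I_n}) U V ii jj s L (G : R) N c :
  robinson_bound a dl d -> 0 <= dl ->
  (forall i j, `|A i j| <= a) -> (#|I| + #|J|)%N = d.+3 ->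
  perturbed_fp A dl I J U V ii jj s L ->
  (forall i j, i \in I -> j \in J -> V s i - U s j <= G) ->
  (0 < N)%N -> (L <= N ^ d)%N -> c \in J ->
  (forall tau, (s <= tau <= s + L)%N -> ~ near_argmax dl J (fun j => - U tau j) c) ->
  forall i j, i \in I -> j \in J ->
    N%:R * (V (s + L)%N i - U (s + L)%N j - G) <=
      d%:R * (6%:R * a + 2%:R * dl) * N%:R ^+ d.
Proof.
move=> hP hdl hA hc hs hG hN hL cJ hnc i j iI jJ.
have hAT i' j' : `|(- A^T) i' j'| <= a by rewrite !mxE normrN.
have hcT : (#|J| + #|I|)%N = d.+3 by rewrite addnC.
have hGT j' i' : j' \in J -> i' \in I -> - U s j' - - V s i' <= G.
  by move=> j'J i'I; have := hG _ _ i'I j'J; lra.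
have := robinson_bound_drop_row hP hdl hAT hcT (perturbed_fp_tr hs) hGT hN hL cJ hnc.
move/(_ j i jJ iI).
by rewrite opprK [- _ + _]addrC.
Qed.

(* On the last N ^ d steps either some strategy is never near-optimal, and it
   can be discarded, or each is near-optimal at some step, and the gap stays
   within O(N ^ d) of its initial bound G. *)
Lemma robinson_window a dl d m n (A : 'M[R]_(m, n))
    (I : {set 'I_m}) (J : {set 'I_n}) U V ii jj s u (G G' : R) N :
  robinson_bound a dl d -> 0 <= dl ->
  (forall i j, `|A i j| <= a) -> (#|I| + #|J|)%N = d.+3 ->
  perturbed_fp A dl I J U V ii jj s u -> (0 < N)%N -> (N ^ d <= u)%N ->
  (forall i j, i \in I -> j \in J -> V s i - U s j <= G) ->
  (forall i j, i \in I -> j \in J ->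
     V (s + u - N ^ d)%N i - U (s + u - N ^ d)%N j <= G') ->
  forall i j, i \in I -> j \in J ->
    N%:R * (V (s + u)%N i - U (s + u)%N j - G') <=
      d%:R * (6%:R * a + 2%:R * dl) * N%:R ^+ d
    \/ V (s + u)%N i - U (s + u)%N j - G <= 4%:R * a * (N ^ d)%:R + 2%:R * dl.
Proof.
move=> hP hdl hA hc hs hN hLu hG hG'.
set L := (N ^ d)%N in hLu hG' *; set s' := (s + u - L)%N in hG' *.
have eqL : (s' + L)%N = (s + u)%N by rewrite /s'; lia.
have hsub : perturbed_fp A dl I J U V ii jj s' L by apply: perturbed_fp_sub hs; lia.
have hL : (0 < L)%N by rewrite expn_gt0 hN.
have [[r rI hr]|hnr] := pselect (exists2 r, r \in I & forall tau,
    (s' <= tau <= s' + L)%N -> ~ near_argmax dl I (V tau) r).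
  move=> i j iI jJ; left; rewrite -eqL.
  exact: (robinson_bound_drop_row hP hdl hA hc hsub hG' hN (leqnn _) rI hr).
have [[c cJ hc']|hnc] := pselect (exists2 c, c \in J & forall tau,
    (s' <= tau <= s' + L)%N -> ~ near_argmax dl J (fun j => - U tau j) c).
  move=> i j iI jJ; left; rewrite -eqL.
  exact: (robinson_bound_drop_col hP hdl hA hc hsub hG' hN (leqnn _) cJ hc').
have hI k : k \in I ->
    exists2 tau, (s' <= tau <= s + u)%N & near_argmax dl I (V tau) k.
  move=> kI; apply: contrapT => hno; apply: hnr; exists k => // tau htau hk.
  by apply: hno; exists tau; rewrite -?eqL.
have hJ l : l \in J ->
    exists2 tau, (s' <= tau <= s + u)%N & near_argmax dl J (fun j => - U tau j) l.
  move=> lJ; apply: contrapT => hno; apply: hnc; exists l => // tau htau hl.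
  by apply: hno; exists tau; rewrite -?eqL.
move=> i j iI jJ; right.
have := perturbed_fp_gap_all_near_argmax hA hs (s' := s') _ _ hG hI hJ iI jJ.
have -> : (s + u - s')%N = L by rewrite /s'; lia.
by move=> /(_ ltac:(lia) ltac:(lia)); lra.
Qed.

Lemma robinson_gap_growth a dl d m n (A : 'M[R]_(m, n))
    (I : {set 'I_m}) (J : {set 'I_n}) U V ii jj s (G : R) N :
  robinson_bound a dl d -> 0 <= dl ->
  (forall i j, `|A i j| <= a) -> (#|I| + #|J|)%N = d.+3 ->
  (forall i j, i \in I -> j \in J -> V s i - U s j <= G) -> (0 < N)%N ->
  forall u, perturbed_fp A dl I J U V ii jj s u ->
  forall i j, i \in I -> j \in J ->
    N%:R * (V (s + u)%N i - U (s + u)%N j - G) <=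
      N%:R * (6%:R * a * (N ^ d)%:R + 2%:R * dl)
      + u%:R * (d%:R * (6%:R * a + 2%:R * dl)).
Proof.
move=> hP hdl hA hc hG hN; elim/ltn_ind => u IH hs i j iI jJ.
have ha : 0 <= a := le_trans (normr_ge0 _) (hA i j).
set L := (N ^ d)%N; set K := d%:R * (6%:R * a + 2%:R * dl).
have hK : 0 <= K by apply: mulr_ge0; [rewrite ler0n | lra].
have hN0 : 0 < N%:R :> R by rewrite ltr0n.
have hmono : N%:R * (4%:R * a * L%:R + 2%:R * dl) <=
    N%:R * (6%:R * a * L%:R + 2%:R * dl) + u%:R * K.
  have : 0 <= u%:R * K by apply: mulr_ge0; rewrite ?ler0n.
  have : 0 <= N%:R * (L%:R * a) by apply: mulr_ge0; rewrite ?mulr_ge0 ?ler0n.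
  lra.
case: (ltnP u L) => huL.
  have := perturbed_fp_driftV hA hs (tau := s) (k := u) i (leqnn s) (leqnn _).
  have := perturbed_fp_driftU hA hs (tau := s) (k := u) j (leqnn s) (leqnn _).
  have : u%:R * a <= L%:R * a by apply: ler_wpM2r => //; rewrite ler_nat ltnW.
  have : 0 <= L%:R * a by apply: mulr_ge0; rewrite ?ler0n.
  move=> ? ? /andP[? ?] /andP[? ?]; have := hG _ _ iI jJ => ?.
  by apply: le_trans hmono; apply: ler_wpM2l; [exact: ltW | lra].
set G' := G + (6%:R * a * L%:R + 2%:R * dl) + (u - L)%:R * K / N%:R.
have eG' : N%:R * G' = N%:R * G + N%:R * (6%:R * a * L%:R + 2%:R * dl) + (u - L)%:R * K.
  by rewrite /G'; field; rewrite lt0r_neq0.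
have hG' i' j' : i' \in I -> j' \in J ->
    V (s + u - L)%N i' - U (s + u - L)%N j' <= G'.
  have hL : (0 < L)%N by rewrite expn_gt0 hN.
  move=> i'I j'J; have hsub : perturbed_fp A dl I J U V ii jj s (u - L).
    by apply: perturbed_fp_sub hs; rewrite // leq_add2l leq_subr.
  have := IH (u - L)%N _ hsub i' j' i'I j'J.
  rewrite ltn_subrL hL (leq_trans hL huL) addnBA // => /(_ isT) h.
  by rewrite -/L -/K in h; rewrite -(ler_pM2l hN0) eG'; lra.
have eu : u%:R = (u - L)%:R + L%:R :> R by rewrite -natrD subnK.
case: (robinson_window hP hdl hA hc hs hN huL hG hG' iI jJ) => h.
  by rewrite -/K -natrX in h; rewrite eu; lra.
by apply: le_trans hmono; apply: ler_wpM2l; [exact: ltW | lra].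
Qed.

Lemma robinson_boundS a dl d :
  0 <= dl -> robinson_bound a dl d -> robinson_bound a dl d.+1.
Proof.
move=> hdl hP m n A I J U V ii jj s t G N i j hA hc hs hG hN htN iI jJ.
have ha : 0 <= a := le_trans (normr_ge0 _) (hA i j).
apply: le_trans (robinson_gap_growth hP hdl hA hc hG hN hs iI jJ) _.
set L := (N ^ d)%N; set K := 6%:R * a + 2%:R * dl.
have hK : 0 <= d%:R * K by apply: mulr_ge0; rewrite ?ler0n /K //; lra.
have hNL : t%:R <= N%:R * L%:R :> R by rewrite -natrM ler_nat mulnC -expnSr.
have q1 : t%:R * (d%:R * K) <= N%:R * L%:R * (d%:R * K) by apply: ler_wpM2r.
have q2 : N%:R * dl <= N%:R * L%:R * dl.
  by apply: ler_wpM2r => //; rewrite ler_peMr ?ler0n // ler1n expn_gt0 hN.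
have -> : d.+1%:R = d%:R + 1 :> R by rewrite natr1.
rewrite exprS -natrX -/L /K in q1 *; lra.
Qed.

Lemma robinson_bound_all a dl d : 0 <= dl -> robinson_bound a dl d.
Proof.
by move=> hdl; elim: d => [|d IH]; [exact: robinson_bound0 | exact: robinson_boundS].
Qed.

End PerturbedFictitiousPlay.

(** * Averaged strategies and the duality gap *)

Section AveragedStrategies.
Variable R : realType.

Lemma le_vmax m (w : 'I_m -> R) i : w i <= vmax w.
Proof. by rewrite /vmax; case: pickP => [k _|/(_ i)//]; apply: le_bigmax. Qed.

Lemma vmin_le m (w : 'I_m -> R) i : vmin w <= w i.
Proof. by rewrite /vmin; case: pickP => [k _|/(_ i)//]; apply: bigmin_le. Qed.

Lemma vmax_attained m (w : 'I_m -> R) (i0 : 'I_m) : exists i, vmax w = w i.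
Proof.
exists [arg max_(i > i0) w i]%O; case: arg_maxP => // i _ hi.
apply/eqP; rewrite eq_le le_vmax andbT /vmax; case: pickP => [k _|/(_ i0)//].
by apply: bigmax_le => [|j _]; apply: hi.
Qed.

Lemma vmin_attained m (w : 'I_m -> R) (i0 : 'I_m) : exists i, vmin w = w i.
Proof.
exists [arg min_(i < i0) w i]%O; case: arg_minP => // i _ hi.
apply/eqP; rewrite eq_le vmin_le /vmin; case: pickP => [k _|/(_ i0)//].
by apply: le_bigmin => [|j _]; apply: hi.
Qed.

Lemma entry_bound m n (A : 'M[R]_(m, n)) : exists a, forall i j, `|A i j| <= a.
Proof.
exists (\big[Num.max/0]_(k : 'I_m * 'I_n) `|A k.1 k.2|) => i j.
exact: (le_bigmax _ (fun k : 'I_m * 'I_n => `|A k.1 k.2|) (i, j)).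
Qed.

Lemma sum_evM m (f : 'I_m -> R) (k : 'I_m) : \sum_i ev k i * f i = f k.
Proof.
rewrite (bigD1 k) //= /ev eqxx mul1r big1 ?addr0 // => i /negbTE ->.
by rewrite mul0r.
Qed.

Definition cumxA m n (A : 'M[R]_(m, n)) (xi : nat -> 'I_m) t j :=
  \sum_(1 <= k < t.+1) A (xi k) j.
Definition cumAy m n (A : 'M[R]_(m, n)) (yj : nat -> 'I_n) t i :=
  \sum_(1 <= k < t.+1) A i (yj k).

Lemma Ay_tr m n (A : 'M[R]_(m, n)) y i : Ay A y i = xA A^T y i.
Proof. by apply: eq_bigr => j _; rewrite mxE mulrC. Qed.

Lemma cumAy_tr m n (A : 'M[R]_(m, n)) yj t i : cumAy A yj t i = cumxA A^T yj t i.
Proof. by apply: eq_bigr => k _; rewrite mxE. Qed.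

Lemma xA_avg m n (A : 'M[R]_(m, n)) xi t j :
  xA A (avg xi t) j = cumxA A xi t j / t%:R.
Proof.
rewrite /xA /avg /cumxA.
under eq_bigr => i _ do rewrite mulrAC.
rewrite -mulr_suml; congr (_ * _).
under eq_bigr => i _ do rewrite mulr_suml.
by rewrite exchange_big /=; apply: eq_bigr => k _; apply: sum_evM.
Qed.

Lemma Ay_avg m n (A : 'M[R]_(m, n)) yj t i :
  Ay A (avg yj t) i = cumAy A yj t i / t%:R.
Proof. by rewrite Ay_tr xA_avg cumAy_tr. Qed.

Lemma xA_anti_avg m n (A : 'M[R]_(m, n)) xi xi' t j : (0 < t)%N ->
  xA A (anti_avg xi xi' t) j = (cumxA A xi t j + A (xi' t.+1) j) / t.+1%:R.
Proof.
move=> ht; have -> : xA A (anti_avg xi xi' t) j =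
    t%:R / t.+1%:R * xA A (avg xi t) j + 1 / t.+1%:R * xA A (ev (xi' t.+1)) j.
  rewrite /xA !mulr_sumr -big_split /=; apply: eq_bigr => i _; rewrite /anti_avg; ring.
rewrite xA_avg [xA _ _ _]sum_evM.
have t0 : t%:R != 0 :> R by rewrite pnatr_eq0 -lt0n.
by field; rewrite t0 andbT addrC natr1 pnatr_eq0.
Qed.

Lemma Ay_anti_avg m n (A : 'M[R]_(m, n)) yj yj' t i : (0 < t)%N ->
  Ay A (anti_avg yj yj' t) i = (cumAy A yj t i + A i (yj' t.+1)) / t.+1%:R.
Proof. by move=> ht; rewrite Ay_tr xA_anti_avg // cumAy_tr mxE. Qed.

Lemma avg_simplex m (s : nat -> 'I_m) t : (0 < t)%N -> simplex (avg s t : 'I_m -> R).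
Proof.
move=> ht; split=> [r|].
  by apply: divr_ge0; rewrite ?ler0n //; apply: sumr_ge0 => k _; rewrite ler0n.
rewrite /avg -mulr_suml exchange_big /=.
have ev1 k : \sum_i ev (s k) i = 1 :> R.
  by rewrite -[RHS](sum_evM (fun=> 1) (s k)); under [RHS]eq_bigr do rewrite mulr1.
under eq_bigr do rewrite ev1.
by rewrite sumr_const_nat subn1 divff // pnatr_eq0 -lt0n.
Qed.

Lemma vmin_xA_le_vmax_Ay m n (A : 'M[R]_(m, n)) x y : simplex x -> simplex y ->
  vmin (xA A x) <= vmax (Ay A y).
Proof.
move=> [x0 x1] [y0 y1].
apply: (@le_trans _ _ (\sum_j y j * xA A x j)).
  rewrite -[leLHS]mul1r -y1 mulr_suml.
  by apply: ler_sum => j _; apply: ler_wpM2l => //; apply: vmin_le.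
apply: (@le_trans _ _ (\sum_i x i * Ay A y i)); last first.
  rewrite -[leRHS]mul1r -x1 mulr_suml.
  by apply: ler_sum => i _; apply: ler_wpM2l => //; apply: le_vmax.
rewrite /xA /Ay; under eq_bigr => j _ do rewrite mulr_sumr.
under [in leRHS]eq_bigr => i _ do rewrite mulr_sumr.
rewrite exchange_big /=; apply: ler_sum => i _; apply: ler_sum => j _.
by rewrite mulrCA [y _ * _]mulrC.
Qed.

Lemma game_value_bounds m n (A : 'M[R]_(m, n)) x y : simplex x -> simplex y ->
  vmin (xA A x) <= game_value A <= vmax (Ay A y).
Proof.
move=> hx hy; apply/andP; split.
  apply: sup_upper_bound; last by exists x.
  split; first by exists (vmin (xA A x)), x.
  by exists (vmax (Ay A y)) => v [x' [hx' ->]]; apply: vmin_xA_le_vmax_Ay.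
apply: ge_sup; first by exists (vmin (xA A x)), x.
by move=> v [x' [hx' ->]]; apply: vmin_xA_le_vmax_Ay.
Qed.

Definition duality_gap m n (A : 'M[R]_(m, n)) (x : 'I_m -> R) (y : 'I_n -> R) :=
  vmax (Ay A y) - vmin (xA A x).

Lemma duality_gap_avg m n (A : 'M[R]_(m, n)) xi yj t : (0 < t)%N ->
  exists i j, duality_gap A (avg xi t) (avg yj t) * t%:R =
              cumAy A yj t i - cumxA A xi t j.
Proof.
move=> ht; rewrite /duality_gap.
have [i ->] := vmax_attained (Ay A (avg yj t)) (xi 0%N).
have [j ->] := vmin_attained (xA A (avg xi t)) (yj 0%N).
exists i, j; rewrite Ay_avg xA_avg -mulrBl mulfVK //.
by rewrite pnatr_eq0 -lt0n.
Qed.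

End AveragedStrategies.

(** * Convergence rates *)

Section Rates.
Variable R : realType.

Lemma nat_rootK (t d : nat) : (0 < d)%N -> (t%:R `^ d%:R^-1) ^+ d = t%:R :> R.
Proof.
move=> hd; rewrite -powR_mulrn ?powR_ge0 // -powRrM mulVf ?powRr1 ?ler0n //.
by rewrite pnatr_eq0 -lt0n.
Qed.

Lemma nat_root_ge1 (t d : nat) : (0 < t)%N -> 1 <= t%:R `^ d%:R^-1 :> R.
Proof.
move=> ht; rewrite -[leLHS](powRr0 t%:R).
by apply: ler_powR; rewrite ?ler1n ?invr_ge0 ?ler0n.
Qed.

(* Take N := floor (t ^ (1 / d)) + 1 <= 2 t ^ (1 / d). *)
Lemma rate_of_window_bound (g : nat -> R) (K : R) d : 0 <= K -> (0 < d)%N ->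
  (forall t N, (0 < t)%N -> (0 < N)%N -> (t <= N ^ d)%N ->
     N%:R * (g t * t%:R) <= K * N%:R ^+ d) ->
  exists C, forall t, (0 < t)%N -> g t <= C * t%:R `^ (- d%:R^-1).
Proof.
case: d => // d hK _ hyp; exists (K * 2%:R ^+ d) => t ht.
have w1 := nat_root_ge1 d.+1 ht; have wd := nat_rootK t (ltn0Sn d).
set w := t%:R `^ _ in w1 wd *; set N := (Num.truncn w).+1.
have w0 : 0 < w by apply: lt_le_trans w1.
have hN1 : w < N%:R by apply: truncnS_gt.
have hN2 : N%:R <= 2%:R * w.
  have : (Num.truncn w)%:R <= w by rewrite truncn_le ltW.
  by rewrite /N -natr1; lra.
have htN : (t <= N ^ d.+1)%N.
  by rewrite -(ler_nat R) natrX -wd ler_pXn2r ?nnegrE ?ler0n ?ltW.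
have := hyp t N ht isT htN; rewrite exprS [K * _]mulrCA ler_pM2l ?ltr0n // => h.
rewrite powRN -/w ler_pdivlMr // -(ler_pM2r (exprn_gt0 d w0)).
apply: (le_trans (y := K * N%:R ^+ d)); first by rewrite -mulrA -exprS wd.
rewrite -mulrA -exprMn; apply: ler_wpM2l => //.
by apply: lerXn2r; rewrite ?nnegrE ?ler0n //; lra.
Qed.

Lemma cvg_nat_powRN (r : R) : 0 < r -> (fun t : nat => t%:R `^ (- r)) @ \oo --> 0.
Proof.
move=> r0; apply/cvgrPdist_le => eps eps0.
set b := eps `^ (- r^-1).
exists (Num.truncn b).+1 => // t /= ht.
have bt : b <= t%:R.
  by apply: le_trans (ltW (truncnS_gt b)) _; rewrite ler_nat.
have t0 : 0 < t%:R :> R by rewrite ltr0n (leq_ltn_trans (leq0n _) ht).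
have := ge0_ler_powR (ltW r0) (powR_ge0 _ _) (ler0n _ t) bt.
rewrite -powRrM mulNr mulVf ?lt0r_neq0 // (powR_inv1 (ltW eps0)) => h.
rewrite sub0r normrN ger0_norm ?powR_ge0 // powRN -[leRHS]invrK.
by rewrite lef_pV2 ?posrE ?invr_gt0 ?powR_gt0.
Qed.

Lemma cvg_sandwich (lo hi : nat -> R) (v : R) :
  (forall t, (0 < t)%N -> lo t <= v <= hi t) ->
  (fun t => hi t - lo t) @ \oo --> 0 -> lo @ \oo --> v /\ hi @ \oo --> v.
Proof.
move=> hb hgap; have vB : (fun t => v - (hi t - lo t)) @ \oo --> v.
  by rewrite -[X in _ --> X]subr0; apply: cvgB => //; exact: cvg_cst.
have vD : (fun t => v + (hi t - lo t)) @ \oo --> v.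
  by rewrite -[X in _ --> X]addr0; apply: cvgD => //; exact: cvg_cst.
split; [apply: squeeze_cvgr vB (cvg_cst v) | apply: squeeze_cvgr (cvg_cst v) vD];
  by exists 1%N => // t /= /hb /andP[? ?]; apply/andP; split; lra.
Qed.

End Rates.

(** * Anticipatory fictitious play *)

Section AnticipatoryFictitiousPlay.
Variable R : realType.

(* The anticipated average is (t / t.+1) times the average plus one pure
   strategy over t.+1, so best responses to it are 2a-approximate best
   responses to the cumulative payoffs. *)
Lemma AFP_perturbed_fp m n (A : 'M[R]_(m, n)) xi xi' yj yj' a T :
  AFP A xi xi' yj yj' -> (forall i j, `|A i j| <= a) ->
  perturbed_fp A (2%:R * a) [set: 'I_m]%SET [set: 'I_n]%SET (cumxA A xi) (cumAy A yj)
    (fun t => xi t.+1) (fun t => yj t.+1) 0 T.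
Proof.
move=> hafp hA tau _.
have ha : 0 <= a := le_trans (normr_ge0 _) (hA (xi 0%N) (yj 0%N)).
split=> [j|i||].
- by rewrite /cumxA [LHS]big_nat_recr.
- by rewrite /cumAy [LHS]big_nat_recr.
- split=> [|k _]; first by rewrite finset.in_setT.
  case: (posnP tau) => [->|htau].
    by rewrite /cumAy !big_geq //; lra.
  have [_ _ /eqP hbr _] := hafp tau htau.
  have := le_vmax (Ay A (anti_avg yj yj' tau)) k.
  rewrite -hbr !Ay_anti_avg // ler_pM2r ?invr_gt0 ?ltr0n //.
  have := hA k (yj' tau.+1); have := hA (xi tau.+1) (yj' tau.+1).
  by rewrite !ler_norml => /andP[? ?] /andP[? ?]; lra.
- split=> [|k _]; first by rewrite finset.in_setT.
  case: (posnP tau) => [->|htau].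
    by rewrite /cumxA !big_geq //; lra.
  have [_ _ _ /eqP hbr] := hafp tau htau.
  have := vmin_le (xA A (anti_avg xi xi' tau)) k.
  rewrite -hbr !xA_anti_avg // ler_pM2r ?invr_gt0 ?ltr0n //.
  have := hA (xi' tau.+1) k; have := hA (xi' tau.+1) (yj tau.+1).
  by rewrite !ler_norml => /andP[? ?] /andP[? ?]; lra.
Qed.

Lemma AFP_gap_window m n (A : 'M[R]_(m, n)) xi xi' yj yj' a :
  AFP A xi xi' yj yj' -> (forall i j, `|A i j| <= a) ->
  forall t N, (0 < t)%N -> (0 < N)%N -> (t <= N ^ (m + n - 2))%N ->
  N%:R * (duality_gap A (avg xi t) (avg yj t) * t%:R) <=
    (m + n - 2)%N%:R * (6%:R * a + 2%:R * (2%:R * a)) * N%:R ^+ (m + n - 2).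
Proof.
move=> hafp hA t N ht hN htN; have [i [j ->]] := duality_gap_avg A xi yj ht.
have ha : 0 <= a := le_trans (normr_ge0 _) (hA i j).
have hc : (#|[set: 'I_m]%SET| + #|[set: 'I_n]%SET|)%N = (m + n - 2).+2.
  by rewrite !cardsT !card_ord; have := ltn_ord i; have := ltn_ord j; lia.
have hG i' j' : i' \in [set: 'I_m]%SET -> j' \in [set: 'I_n]%SET ->
    cumAy A yj 0 i' - cumxA A xi 0 j' <= 0.
  by rewrite /cumAy /cumxA !big_geq // subrr.
have hdl : 0 <= 2%:R * a by lra.
have hP : robinson_bound a (2%:R * a) (m + n - 2) := robinson_bound_all hdl.
have := hP _ _ A _ _ _ _ _ _ 0 t 0 N i j hA hc (AFP_perturbed_fp hafp hA) hG hN htN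
  (finset.in_setT i) (finset.in_setT j).
by rewrite add0n subr0.
Qed.

Lemma AFP_gap_le0 m n (A : 'M[R]_(m, n)) xi xi' yj yj' t :
  AFP A xi xi' yj yj' -> (m + n - 2)%N = 0%N -> (0 < t)%N ->
  duality_gap A (avg xi t) (avg yj t) <= 0.
Proof.
move=> hafp hd ht; have [i [j e]] := duality_gap_avg A xi yj ht.
have [a hA] := entry_bound A.
have hc : (#|[set: 'I_m]%SET| + #|[set: 'I_n]%SET|)%N = 2%N.
  by rewrite !cardsT !card_ord; have := ltn_ord i; have := ltn_ord j; lia.
have hG i' j' : i' \in [set: 'I_m]%SET -> j' \in [set: 'I_n]%SET ->
    cumAy A yj 0 i' - cumxA A xi 0 j' <= 0.
  by rewrite /cumAy /cumxA !big_geq // subrr.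
have := perturbed_fp_singleton_gap hc (AFP_perturbed_fp hafp hA) hG
  (finset.in_setT i) (finset.in_setT j).
by move/(_ t); rewrite add0n -e pmulr_lle0 // ltr0n.
Qed.

Lemma AFP_gap_rate m n (A : 'M[R]_(m, n)) xi xi' yj yj' :
  AFP A xi xi' yj yj' ->
  (exists C, forall t, (0 < t)%N -> duality_gap A (avg xi t) (avg yj t) <=
     C * t%:R `^ (- ((m + n - 2)%N%:R)^-1))
  /\ (fun t => duality_gap A (avg xi t) (avg yj t)) @ \oo --> 0.
Proof.
move=> hafp; set gap := fun t => duality_gap A (avg xi t) (avg yj t).
have gap_ge0 t : (0 < t)%N -> 0 <= gap t.
  by move=> ht; rewrite subr_ge0; apply: vmin_xA_le_vmax_Ay; apply: avg_simplex.
have [a hA] := entry_bound A.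
have ha : 0 <= a := le_trans (normr_ge0 _) (hA (xi 0%N) (yj 0%N)).
have [d0|d0] := posnP (m + n - 2)%N.
  have gap0 t : (0 < t)%N -> gap t = 0.
    by move=> ht; apply/eqP; rewrite eq_le gap_ge0 ?(AFP_gap_le0 hafp).
  split; first by exists 0 => t ht; rewrite -/(gap t) gap0 ?mul0r.
  apply: (squeeze_cvgr (f := cst 0) (h := cst 0)); try exact: cvg_cst.
  by exists 1%N => // t /= ht; rewrite gap0 ?lexx.
have hK : 0 <= (m + n - 2)%N%:R * (6%:R * a + 2%:R * (2%:R * a)) :> R.
  by apply: mulr_ge0; [rewrite ler0n | lra].
have [C hC] := rate_of_window_bound hK d0 (AFP_gap_window hafp hA).
split; first by exists C.
apply: (squeeze_cvgr (f := cst 0)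
  (h := fun t => C * t%:R `^ (- ((m + n - 2)%N%:R)^-1))).
- by exists 1%N => // t /= ht; rewrite gap_ge0 ?hC.
- exact: cvg_cst.
- rewrite -(mulr0 C); apply: cvgM; first exact: cvg_cst.
  by apply: cvg_nat_powRN; rewrite invr_gt0 ltr0n.
Qed.

End AnticipatoryFictitiousPlay.

Theorem proposition1 (R : realType) (m n : nat) (A : 'M[R]_(m, n))
    (xi xi' : nat -> 'I_m) (yj yj' : nat -> 'I_n) :
  AFP A xi xi' yj yj' ->
  [/\ (fun t => vmin (xA A (avg xi t))) @ \oo --> game_value A,
      (fun t => vmax (Ay A (avg yj t))) @ \oo --> game_value A
    & exists C : R, forall t : nat, (1 <= t)%N ->
        vmax (Ay A (avg yj t)) - vmin (xA A (avg xi t))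
          <= C * (t%:R `^ (- ((m + n - 2)%N%:R)^-1))].
Proof.
move=> hafp; have [hrate hgap] := AFP_gap_rate hafp.
have hb t : (0 < t)%N ->
    vmin (xA A (avg xi t)) <= game_value A <= vmax (Ay A (avg yj t)).
  by move=> ht; apply: game_value_bounds; apply: avg_simplex.
by have [] := cvg_sandwich hb hgap.
Qed.
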